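(* In the setting and notation described in the context (GKSM iteration), assume in addition that the stepsizes satisfy $0<\alpha_{\min}\le\alpha_k\le\alpha_{\max}<\frac{2\underline{\eta}}{\underline{\eta}+L}$ for all $k$, and put $\upsilon:=\frac{\underline{\eta}}{\alpha_{\max}}-\frac{\underline{\eta}+L}{2}>0$ and $\Delta_k:=\min_{1\le k'\le k}\|\mathbf{x}_{k'+1}-\mathbf{x}_{k'}\|_2^2$. Then, for any $K\in\{1,2,\dots\}\cup\{+\infty\}$ and all $k\ge1$: (i) $F(\mathbf{x}_{k+1})\le F(\mathbf{x}_k)$; (ii) $\Delta_k\le \dfrac{F(\mathbf{x}_1)-F^*}{\upsilon\,k}$, where $F^*=\inf_{\mathbf{x}\in\mathcal C}F(\mathbf{x})$; (iii) $\|\mathbf{x}_{k+1}-\mathbf{x}_k\|\to0$ as $k\to\infty$.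
   Context: Setting. Identify $\mathbb C^N$ with $\mathbb R^{2N}$ equipped with the real inner product $\mathrm{Re}\langle\mathbf u,\mathbf v\rangle$, where $\langle\mathbf u,\mathbf v\rangle=\mathbf u^{H}\mathbf v$ ($^H$ = conjugate transpose); all gradients are taken with respect to this inner product. Let $\mathbf A\in\mathbb C^{m\times N}$, $\mathbf y\in\mathbb C^m$ with $\mathbf A^H\mathbf y\neq\mathbf 0$, and $h(\mathbf x)=\frac12\|\mathbf A\mathbf x-\mathbf y\|_2^2$ (so $\nabla h(\mathbf x)=\mathbf A^H(\mathbf A\mathbf x-\mathbf y)$). Let $f:\mathbb C^N\to\mathbb R$ be differentiable and bounded below, with $\nabla f$ $L$-Lipschitz ($L>0$): $\|\nabla f(\mathbf x_1)-\nabla f(\mathbf x_2)\|\le L\|\mathbf x_1-\mathbf x_2\|$. Let $\mathcal C\subseteq\mathbb C^N$ be nonempty, closed and convex, $\iota_{\mathcal C}$ its indicator function ($0$ on $\mathcal C$, $+\infty$ outside), $F=h+f$, $F_{\mathcal C}=F+\iota_{\mathcal C}$, and $\|\mathbf x\|_{\mathbf M}^2=\mathbf x^H\mathbf M\mathbf x$. GKSM iteration. Fix $K\in\{1,2,\dots\}\cup\{+\infty\}$, stepsizes $\alpha_k>0$, and Hermitian matrices $\mathbf B_k\in\mathbb C^{N\times N}$ with $\underline{\eta}\,\mathbf I\preceq\mathbf B_k\preceq\overline{\eta}\,\mathbf I$ for all $k$, where $0<\underline{\eta}\le\overline{\eta}<\infty$ (in the paper $\mathbf B_k$ is produced by a modified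 self-scaling Hermitian rank-one quasi-Newton rule whose output satisfies these bounds). Let $\mathbf V_1=\mathbf A^H\mathbf y/\|\mathbf A^H\mathbf y\|$ and choose $\mathbf x_1\in\mathcal C\cap\operatorname{range}(\mathbf V_1)$. For $k=1,2,\dots$: define $\bar F_k(\mathbf x)=h(\mathbf x)+\mathrm{Re}\langle\nabla f(\mathbf x_k),\mathbf x\rangle+\frac{1}{2\alpha_k}\|\mathbf x-\mathbf x_k\|_{\mathbf B_k}^2$; let $\boldsymbol\beta_k$ be the (unique) minimizer of $\boldsymbol\beta\mapsto\bar F_k(\mathbf V_k\boldsymbol\beta)$ over $\{\boldsymbol\beta:\mathbf V_k\boldsymbol\beta\in\mathcal C\}$, and set $\mathbf x_{k+1}=\mathbf V_k\boldsymbol\beta_k$. Then, if $k\le K$: compute $\mathbf r_k=\nabla\bar F_k(\mathbf x_{k+1})=\mathbf A^H(\mathbf A\mathbf x_{k+1}-\mathbf y)+\nabla f(\mathbf x_k)+\alpha_k^{-1}\mathbf B_k(\mathbf x_{k+1}-\mathbf x_k)$ and $\tilde{\mathbf r}_k=(\mathbf I-\mathbf V_k\mathbf V_k^H)\mathbf r_k$; if $\tilde{\mathbf r}_k\ne\mathbf 0$ set $\mathbf V_{k+1}=[\mathbf V_k,\ \tilde{\mathbf r}_k/\|\tilde{\mathbf r}_k\|]$, otherwise $\mathbf V_{k+1}=\mathbf V_k$. If $k>K$: set $\mathbf V_{k+1}=\mathbf I_N$. (Thus every $\mathbf V_k$ has orthonormal columns, $\mathbf V_k^H\mathbf V_k=\mathbf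 I$.) *)

From mathcomp Require Import all_boot all_order all_algebra.
From mathcomp Require Import all_classical all_reals all_analysis.
From mathcomp Require Export complex.
Import GRing.Theory Num.Theory.
Set Implicit Arguments.
Unset Strict Implicit.
Unset Printing Implicit Defensive.
Local Open Scope ring_scope.
Local Open Scope classical_set_scope.

Section GKSMDefs.
Context {R : realType}.

Definition adj {p q : nat} (M : 'M[R[i]]_(p, q)) : 'M[R[i]]_(q, p) :=
  (map_mx conjc M)^T.

(* real inner product Re <u, v> = Re (u^H v) on C^n ~ R^{2n} *)
Definition rdot {n : nat} (u v : 'cV[R[i]]_n) : R := complex.Re ((adj u *m v) 0 0).
Definition nrm2 {n : nat} (u : 'cV[R[i]]_n) : R := rdot u u.
Definition nrm {n : nat} (u : 'cV[R[i]]_n) : R := Num.sqrt (nrm2 u).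

(* ||x||_M^2 = x^H M x  (real for Hermitian M; we take the real part) *)
Definition qform {n : nat} (M : 'M[R[i]]_n) (u : 'cV[R[i]]_n) : R :=
  complex.Re ((adj u *m M *m u) 0 0).

Definition rscale {n : nat} (r : R) (u : 'cV[R[i]]_n) : 'cV[R[i]]_n :=
  (r%:C)%C *: u.

Definition is_gradient {n : nat} (f : 'cV[R[i]]_n -> R) (g : 'cV[R[i]]_n -> 'cV[R[i]]_n) :=
  forall (u : 'cV[R[i]]_n) (eps : R), 0 < eps ->
    exists2 del : R, 0 < del & forall d : 'cV[R[i]]_n, nrm d < del ->
      `|f (u + d) - f u - rdot (g u) d| <= eps * nrm d.

Definition lipschitz_with {n : nat} (L : R) (g : 'cV[R[i]]_n -> 'cV[R[i]]_n) :=
  forall u v, nrm (g u - g v) <= L * nrm (u - v).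

Definition closed_subset {n : nat} (S : set 'cV[R[i]]_n) :=
  forall u, (forall eps : R, 0 < eps -> exists2 c, S c & nrm (c - u) < eps) -> S u.

Definition convex_subset {n : nat} (S : set 'cV[R[i]]_n) :=
  forall u v (t : R), S u -> S v -> 0 <= t <= 1 -> S (rscale t u + rscale (1 - t) v).

Definition is_hermitian {n : nat} (M : 'M[R[i]]_n) := adj M = M.

Definition loewner_between {n : nat} (lo hi : R) (M : 'M[R[i]]_n) :=
  forall v : 'cV[R[i]]_n, lo * nrm2 v <= qform M v /\ qform M v <= hi * nrm2 v.

Definition colmx {n : nat} (s : seq 'cV[R[i]]_n) : 'M[R[i]]_(n, size s) :=
  \matrix_(a, j) (nth 0 s j) a 0.

(* K in {1,2,...} U {+oo}: Some K or None (= +oo);  "k <= K" *)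
Definition leK (k : nat) (K : option nat) : bool :=
  if K is Some K' then (k <= K')%N else true.

Definition hfun {m n : nat} (A : 'M[R[i]]_(m, n)) (y : 'cV[R[i]]_m) (u : 'cV[R[i]]_n) : R :=
  2^-1 * nrm2 (A *m u - y).

Definition Fbar {m n : nat} (A : 'M[R[i]]_(m, n)) (y : 'cV[R[i]]_m)
  (gf : 'cV[R[i]]_n -> 'cV[R[i]]_n) (alpha : nat -> R) (B : nat -> 'M[R[i]]_n)
  (x : nat -> 'cV[R[i]]_n) (k : nat) (u : 'cV[R[i]]_n) : R :=
  hfun A y u + rdot (gf (x k)) u + (2 * alpha k)^-1 * qform (B k) (u - x k).

(* The GKSM iteration (indices k >= 1; index 0 unused).  Vs k is the list of
   columns of V_k. *)
Definition GKSM_run {m n : nat} (A : 'M[R[i]]_(m, n)) (y : 'cV[R[i]]_m)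
  (gf : 'cV[R[i]]_n -> 'cV[R[i]]_n) (Cs : set 'cV[R[i]]_n) (K : option nat)
  (alpha : nat -> R) (B : nat -> 'M[R[i]]_n)
  (x : nat -> 'cV[R[i]]_n) (Vs : nat -> seq 'cV[R[i]]_n) : Prop :=
  [/\ Vs 1%N = [:: rscale (nrm (adj A *m y))^-1 (adj A *m y)],
      Cs (x 1%N) /\ (exists beta, x 1%N = colmx (Vs 1%N) *m beta),
      (forall k, (0 < k)%N ->
         exists beta : 'cV[R[i]]_(size (Vs k)),
           [/\ x k.+1 = colmx (Vs k) *m beta, Cs (colmx (Vs k) *m beta) &
               forall beta' : 'cV[R[i]]_(size (Vs k)), Cs (colmx (Vs k) *m beta') ->
                 Fbar A y gf alpha B x k (colmx (Vs k) *m beta)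
                 <= Fbar A y gf alpha B x k (colmx (Vs k) *m beta')]),
      (forall k, (0 < k)%N -> leK k K ->
         let r := adj A *m (A *m x k.+1 - y) + gf (x k)
                  + rscale (alpha k)^-1 (B k *m (x k.+1 - x k)) in
         let rt := r - colmx (Vs k) *m (adj (colmx (Vs k)) *m r) in
         Vs k.+1 = if rt != 0 then rcons (Vs k) (rscale (nrm rt)^-1 rt) else Vs k) &
      (forall k, (0 < k)%N -> ~~ leK k K ->
         Vs k.+1 = [seq col j (1%:M : 'M[R[i]]_n) | j <- enum 'I_n])].

Definition Delta {n : nat} (x : nat -> 'cV[R[i]]_n) (k : nat) : R :=
  \big[Num.min/nrm2 (x 2%N - x 1%N)]_(1 <= k' < k.+1) nrm2 (x k'.+1 - x k').

End GKSMDefs.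

(* The iterate x_{k+1} minimises the model Fbar_k over the convex set C ∩ range(V_k),
   which also contains x_k because the subspaces range(V_k) are nested.  Along the
   segment from x_{k+1} to x_k the model is a quadratic whose slope at x_{k+1} is
   therefore nonnegative; its curvature, like the proximal term of Fbar_k(x_{k+1}), is
   at least eta/(2 alpha_k) since B_k >= eta I.  Together with the descent lemma
   f(u + d) <= f(u) + <grad f(u), d> + L/2 |d|^2 this gives the sufficient decrease
   F(x_{k+1}) <= F(x_k) - (eta/alpha_k - L/2) |x_{k+1} - x_k|^2.  Telescoping, and
   F >= Fstar on C, bound the sum of the squared steps by (F(x_1) - Fstar)/upsilon,
   whence the bound on Delta_k and the convergence of the steps to 0. *)

From mathcomp Require Import all_boot all_order all_algebra.
From mathcomp Require Import all_classical all_reals all_analysis.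
From mathcomp Require Import complex.
From mathcomp Require Import ring lra.
Import Order.TTheory GRing.Theory Num.Theory numFieldNormedType.Exports.
Local Open Scope ring_scope.
Local Open Scope classical_set_scope.

Section RealInnerProduct.
Context {R : realType} {n : nat}.
Implicit Types u v w : 'cV[R[i]]_n.

Lemma rdotE u v : rdot u v =
  \sum_i (complex.Re (u i 0) * complex.Re (v i 0) + complex.Im (u i 0) * complex.Im (v i 0)).
Proof.
rewrite /rdot mxE (@raddf_sum _ _ (@complex.Re R : Rcomplex R -> R)).
apply: eq_bigr => i _; rewrite /adj !mxE.
by case: (u i 0) => a b; case: (v i 0) => c d /=; ring.
Qed.

Lemma rdotC u v : rdot u v = rdot v u.
Proof. by rewrite !rdotE; apply: eq_bigr => i _; ring. Qed.

Lemma rdotDl u v w : rdot (u + v) w = rdot u w + rdot v w.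
Proof.
rewrite !rdotE -big_split; apply: eq_bigr => i _; rewrite mxE.
by case: (u i 0) => ? ?; case: (v i 0) => ? ? /=; ring.
Qed.

Lemma rdotDr u v w : rdot w (u + v) = rdot w u + rdot w v.
Proof. by rewrite rdotC rdotDl !(rdotC w). Qed.

Lemma rdotZl t u v : rdot (rscale t u) v = t * rdot u v.
Proof.
rewrite !rdotE mulr_sumr; apply: eq_bigr => i _; rewrite mxE.
by case: (u i 0) => ? ? /=; ring.
Qed.

Lemma rdotZr t u v : rdot v (rscale t u) = t * rdot v u.
Proof. by rewrite rdotC rdotZl rdotC. Qed.

Lemma rdotNl u v : rdot (- u) v = - rdot u v.
Proof.
rewrite !rdotE -sumrN; apply: eq_bigr => i _; rewrite mxE.
by case: (u i 0) => ? ? /=; ring.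
Qed.

Lemma rdotBl u v w : rdot (u - v) w = rdot u w - rdot v w.
Proof. by rewrite rdotDl rdotNl. Qed.

Lemma rdotBr u v w : rdot w (u - v) = rdot w u - rdot w v.
Proof. by rewrite rdotC rdotBl !(rdotC w). Qed.

Lemma rdot0l v : rdot 0 v = 0.
Proof. by rewrite -(subrr v) rdotBl subrr. Qed.

Lemma nrm2_ge0 u : 0 <= nrm2 u.
Proof. by rewrite /nrm2 rdotE; apply: sumr_ge0 => i _; rewrite addr_ge0 // -expr2 sqr_ge0. Qed.

Lemma sqr_nrm u : nrm u ^+ 2 = nrm2 u.
Proof. by rewrite sqr_sqrtr // nrm2_ge0. Qed.

Lemma nrm2Z t u : nrm2 (rscale t u) = t ^+ 2 * nrm2 u.
Proof. by rewrite /nrm2 rdotZl rdotZr mulrA expr2. Qed.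

Lemma nrmZ t u : nrm (rscale t u) = `|t| * nrm u.
Proof. by rewrite /nrm nrm2Z sqrtrM ?sqrtr_sqr // sqr_ge0. Qed.

Lemma nrm2N u : nrm2 (- u) = nrm2 u.
Proof. by rewrite /nrm2 rdotNl rdotC rdotNl opprK. Qed.

Lemma nrm2D u v : nrm2 (u + v) = nrm2 u + 2 * rdot u v + nrm2 v.
Proof. by rewrite /nrm2 rdotDl !rdotDr (rdotC v u); ring. Qed.

Lemma nrm2B u v : nrm2 (u - v) = nrm2 u - 2 * rdot u v + nrm2 v.
Proof. by rewrite nrm2D nrm2N /nrm2 rdotC rdotNl rdotC; ring. Qed.

Lemma qformE (M : 'M[R[i]]_n) v : qform M v = rdot v (M *m v).
Proof. by rewrite /qform /rdot mulmxA. Qed.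

Lemma rdot_le_nrm2 u v c : 0 < c -> rdot u v <= (2 * c)^-1 * nrm2 u + c / 2 * nrm2 v.
Proof.
move=> c_gt0; have sc_gt0 : 0 < Num.sqrt c by rewrite sqrtr_gt0.
have := nrm2_ge0 (rscale (Num.sqrt c)^-1 u - rscale (Num.sqrt c) v).
rewrite nrm2B !nrm2Z rdotZl rdotZr exprVn sqr_sqrtr ?(ltW c_gt0) //.
rewrite mulKf ?gt_eqF // invfM.
move: (nrm2 u) (nrm2 v) (rdot u v) => a b r; lra.
Qed.

End RealInnerProduct.

Section RealScaling.
Context {R : realType} {n : nat}.
Implicit Types u v : 'cV[R[i]]_n.

Lemma rscale0 u : rscale 0 u = 0.
Proof. by rewrite /rscale rmorph0 scale0r. Qed.

Lemma rscale1 u : rscale 1 u = u.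
Proof. by rewrite /rscale rmorph1 scale1r. Qed.

Lemma rscaleDl (s t : R) u : rscale (s + t) u = rscale s u + rscale t u.
Proof. by rewrite /rscale rmorphD scalerDl. Qed.

Lemma rscale_segment (t : R) u v : v + rscale t (u - v) = rscale t u + rscale (1 - t) v.
Proof. by rewrite /rscale rmorphB rmorph1 scalerBl scale1r scalerBr addrCA. Qed.

End RealScaling.

Section DescentLemma.
Context {R : realType}.

Lemma is_derive_approx (g : R -> R) t D :
  (forall e, 0 < e -> exists2 del, 0 < del & forall s, `|s| < del ->
      `|g (s + t) - g t - s * D| <= e * `|s|) ->
  is_derive t 1 g D.
Proof.
move=> g_approx.
have g_cvg : (fun h => h^-1 *: ((g \o shift t) (h *: 1) - g t)) @ 0^' --> D.
  apply/cvgrPdist_le => e e_gt0; have [del del_gt0 Hdel] := g_approx e e_gt0.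
  near=> h.
  have h_neq0 : h != 0 by near: h; exact: nbhs_dnbhs_neq.
  have h_small : `|h| < del by near: h; exact: dnbhs0_lt.
  have := Hdel h h_small.
  rewrite /= /shift [h *: 1]mulr1.
  have -> : D - h^-1 * (g (h + t) - g t) = - h^-1 * (g (h + t) - g t - h * D) by field.
  by rewrite normrM normrN normfV ler_pdivrMl ?normr_gt0 // [X in _ <= X]mulrC.
split; first by apply/cvg_ex; exists D.
by rewrite /derive (cvg_lim _ g_cvg).
Unshelve. all: end_near.
Qed.

Context {n : nat} {f : 'cV[R[i]]_n -> R} {gf : 'cV[R[i]]_n -> 'cV[R[i]]_n} {L : R}.
Implicit Types u d : 'cV[R[i]]_n.
Hypotheses (f_grad : is_gradient f gf) (gf_lip : lipschitz_with L gf) (L_gt0 : 0 < L).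

Lemma is_derive_along_line u d (t : R) :
  is_derive t 1 (fun s => f (u + rscale s d)) (rdot (gf (u + rscale t d)) d).
Proof.
apply: is_derive_approx => e e_gt0; set v := u + rscale t d.
have nd1_gt0 : 0 < nrm d + 1 by rewrite ltr_wpDl ?sqrtr_ge0.
have [del del_gt0 Hdel] := f_grad v _ (divr_gt0 e_gt0 nd1_gt0 : 0 < e / (nrm d + 1)).
exists (del / (nrm d + 1)); first exact: divr_gt0.
move=> s s_small.
have -> : u + rscale (s + t) d = v + rscale s d by rewrite rscaleDl addrA addrAC.
have sd_small : nrm (rscale s d) < del.
  rewrite nrmZ; move: s_small; rewrite ltr_pdivlMr // => s_small.
  by apply: le_lt_trans s_small; rewrite ler_wpM2l // lerDl.
have := Hdel _ sd_small; rewrite rdotZr nrmZ => /le_trans; apply.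
have -> : e / (nrm d + 1) * (`|s| * nrm d) = e * `|s| * (nrm d / (nrm d + 1)) by ring.
by rewrite ler_piMr ?mulr_ge0 ?(ltW e_gt0) // ler_pdivrMr // mul1r lerDl.
Qed.

Lemma rdot_gradient_increment_le u d (t : R) : 0 < t ->
  rdot (gf (u + rscale t d)) d - rdot (gf u) d <= L * t * nrm2 d.
Proof.
move=> t_gt0; have Lt_gt0 : 0 < L * t by rewrite mulr_gt0.
rewrite -rdotBl; apply: le_trans (rdot_le_nrm2 _ _ _ Lt_gt0) _.
have lip : nrm (gf (u + rscale t d) - gf u) <= L * t * nrm d.
  by have := gf_lip (u + rscale t d) u; rewrite addrAC subrr add0r nrmZ gtr0_norm // mulrA.
have lip2 : nrm2 (gf (u + rscale t d) - gf u) <= (L * t) ^+ 2 * nrm2 d.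
  by rewrite -!sqr_nrm -exprMn lerXn2r // nnegrE ?sqrtr_ge0 // mulr_ge0 ?sqrtr_ge0 ?ltW.
suff : (2 * (L * t))^-1 * nrm2 (gf (u + rscale t d) - gf u) <= L * t / 2 * nrm2 d.
  by move: (L * t) => s; lra.
rewrite mulrC ler_pdivrMr ?mulr_gt0 //.
by have -> : L * t / 2 * nrm2 d * (2 * (L * t)) = (L * t) ^+ 2 * nrm2 d by field.
Qed.

Lemma descent_lemma u d : f (u + d) <= f u + rdot (gf u) d + L / 2 * nrm2 d.
Proof.
pose p t := f (u + rscale t d).
pose D t := rdot (gf (u + rscale t d)) d.
pose c := L / 2 * nrm2 d.
have dp (t : R) : is_derive t 1 p (D t) := is_derive_along_line u d t.
pose phi := (p - D 0 \*: id) - c \*: ((id : R -> R) * id).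
have dphi (t : R) : is_derive t 1 phi (D t - D 0 - c * (t + t)).
  by apply: is_derive_eq; rewrite ![_%:A]mulr1.
have phi_cont : {within `[0, 1], continuous phi}.
  by apply: derivable_within_continuous => t _; exact: (@ex_derive _ _ _ _ _ _ _ (dphi t)).
(* Mean value theorem for phi, whose derivative is <= 0 on (0, 1) by the Lipschitz bound. *)
have [t /[1!in_itv] /= /andP[t_gt0 _] phi_mvt] := MVT ltr01 (fun t _ => dphi t) phi_cont.
have : phi 1 <= phi 0.
  rewrite -subr_le0 phi_mvt subr0 mulr1 /D rscale0 addr0 /c.
  have -> : L / 2 * nrm2 d * (t + t) = L * t * nrm2 d by field.
  by rewrite subr_le0; exact: rdot_gradient_increment_le.
have -> : phi 1 = f (u + rscale 1 d) - D 0 * 1 - c * (1 * 1) by [].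
have -> : phi 0 = f (u + rscale 0 d) - D 0 * 0 - c * (0 * 0) by [].
rewrite rscale1 rscale0 addr0 /D rscale0 addr0 /c => phi10.
by clear -phi10; lra.
Qed.

End DescentLemma.

Section ColumnSpan.
Context {R : realType} {n : nat}.
Implicit Types (s t : seq 'cV[R[i]]_n) (z : 'cV[R[i]]_n).

Definition in_colspan t z := exists b : 'cV[R[i]]_(size t), z = colmx t *m b.

Lemma colmx_mulE t (b : 'cV[R[i]]_(size t)) :
  colmx t *m b = \sum_(j < size t) b j 0 *: nth 0 t j.
Proof.
apply/matrixP => a c; rewrite !mxE summxE; apply: eq_bigr => j _.
by rewrite !mxE (ord1 c) mulrC.
Qed.

Lemma in_colspan0 t : in_colspan t 0.
Proof. by exists 0; rewrite mulmx0. Qed.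

Lemma in_colspanD t z1 z2 : in_colspan t z1 -> in_colspan t z2 -> in_colspan t (z1 + z2).
Proof. by move=> [b1 ->] [b2 ->]; exists (b1 + b2); rewrite mulmxDr. Qed.

Lemma in_colspanZ t (c : R[i]) z : in_colspan t z -> in_colspan t (c *: z).
Proof. by move=> [b ->]; exists (c *: b); rewrite scalemxAr. Qed.

Lemma in_colspan_sum t m (F : 'I_m -> 'cV[R[i]]_n) :
  (forall j, in_colspan t (F j)) -> in_colspan t (\sum_(j < m) F j).
Proof. by move=> tF; apply: big_ind => //; [exact: in_colspan0 | exact: in_colspanD]. Qed.

Lemma in_colspan_nth t j : (j < size t)%N -> in_colspan t (nth 0 t j).
Proof.
move=> lt_j; exists (\col_i ((i == Ordinal lt_j)%:R)).
rewrite colmx_mulE (bigD1 (Ordinal lt_j)) //= big1 ?addr0 ?mxE ?eqxx ?scale1r //.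
by move=> i /negbTE i_neq; rewrite mxE i_neq scale0r.
Qed.

Lemma in_colspan_trans s t z :
  (forall j, (j < size s)%N -> in_colspan t (nth 0 s j)) -> in_colspan s z -> in_colspan t z.
Proof.
move=> st [b ->]; rewrite colmx_mulE.
by apply: in_colspan_sum => j; apply/in_colspanZ/st.
Qed.

Lemma in_colspan_rcons s v z : in_colspan s z -> in_colspan (rcons s v) z.
Proof.
apply: in_colspan_trans => j lt_j.
have -> : nth 0 s j = nth 0 (rcons s v) j by rewrite nth_rcons lt_j.
by apply: in_colspan_nth; rewrite size_rcons ltnS ltnW.
Qed.

Lemma in_colspan_id z : in_colspan [seq col j (1%:M : 'M[R[i]]_n) | j <- enum 'I_n] z.
Proof.
have -> : z = \sum_(j < n) z j 0 *: col j (1%:M : 'M[R[i]]_n).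
  apply/matrixP => a c; rewrite summxE (bigD1 a) //= big1 ?addr0 => [|j j_neq].
    by rewrite !mxE eqxx mulr1 (ord1 c).
  by rewrite !mxE eq_sym (negbTE j_neq) mulr0.
apply: in_colspan_sum => j; apply: in_colspanZ.
have lt_j : (j < size [seq col i (1%:M : 'M[R[i]]_n) | i <- enum 'I_n])%N.
  by rewrite size_map size_enum_ord.
by have := in_colspan_nth _ _ lt_j; rewrite (nth_map j) ?size_enum_ord // nth_ord_enum.
Qed.

Lemma convex_colspan t : convex_subset (in_colspan t).
Proof. by move=> u v r tu tv _; apply: in_colspanD; apply: in_colspanZ. Qed.

Lemma convex_subsetI (S T : set 'cV[R[i]]_n) :
  convex_subset S -> convex_subset T -> convex_subset (S `&` T).
Proof. by move=> S_conv T_conv u v r [Su Tu] [Sv Tv] r01; split; [exact: S_conv | exact: T_conv]. Qed.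

End ColumnSpan.

Lemma slope_ge0_of_min {R : realType} (l Q : R) : 0 <= Q ->
  (forall th, 0 < th -> th <= 1 -> 0 <= th * l + th ^+ 2 * Q) -> 0 <= l.
Proof.
move=> Q_ge0 line_ge0; rewrite leNgt; apply/negP => l_lt0.
have den_gt0 : 0 < Q - l + 1 by lra.
(* This [th] lies in (0, 1] and gives th * l + th ^+ 2 * Q = th ^+ 2 * (l - 1) < 0. *)
pose th := - l / (Q - l + 1).
have th_gt0 : 0 < th by rewrite divr_gt0 // oppr_gt0.
have thE : th * (Q - l + 1) = - l by rewrite divfK // gt_eqF.
have th_le1 : th <= 1 by rewrite ler_pdivrMr // mul1r; lra.
have := line_ge0 th th_gt0 th_le1.
nra.
Qed.

Section GKSMStep.
Context {R : realType} {m n : nat}.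
Variables (A : 'M[R[i]]_(m, n)) (y : 'cV[R[i]]_m) (f : 'cV[R[i]]_n -> R).
Variables (gf : 'cV[R[i]]_n -> 'cV[R[i]]_n) (L : R).
Variables (alpha : nat -> R) (B : nat -> 'M[R[i]]_n) (x : nat -> 'cV[R[i]]_n).

Lemma Fbar_line k p w (th : R) :
  Fbar A y gf alpha B x k (p + rscale th w) =
  Fbar A y gf alpha B x k p
  + th * (rdot (A *m p - y) (A *m w) + rdot (gf (x k)) w
          + (2 * alpha k)^-1 * (rdot (p - x k) (B k *m w) + rdot w (B k *m (p - x k))))
  + th ^+ 2 * (2^-1 * nrm2 (A *m w) + (2 * alpha k)^-1 * qform (B k) w).
Proof.
rewrite /Fbar /hfun !qformE.
have -> : A *m (p + rscale th w) - y = (A *m p - y) + rscale th (A *m w).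
  by rewrite mulmxDr /rscale scalemxAr addrAC.
have -> : p + rscale th w - x k = (p - x k) + rscale th w by rewrite addrAC.
rewrite mulmxDr -scalemxAr -/(rscale th (B k *m w)).
rewrite nrm2D nrm2Z !rdotDl !rdotDr !rdotZl !rdotZr.
move: (2 * alpha k)^-1 => c; do ![move: (rdot _ _) => ?]; do ![move: (nrm2 _) => ?]; by field.
Qed.

Lemma Fbar_argmin_decrease k (S : set 'cV[R[i]]_n) (eta eta_hi : R) :
  is_gradient f gf -> lipschitz_with L gf -> 0 < L ->
  loewner_between eta eta_hi (B k) -> 0 <= eta -> 0 < alpha k ->
  convex_subset S -> S (x k) -> S (x k.+1) ->
  (forall z, S z -> Fbar A y gf alpha B x k (x k.+1) <= Fbar A y gf alpha B x k z) ->
  hfun A y (x k.+1) + f (x k.+1)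
    <= hfun A y (x k) + f (x k) - (eta / alpha k - L / 2) * nrm2 (x k.+1 - x k).
Proof.
move=> f_grad gf_lip L_gt0 B_bnd eta_ge0 alpha_gt0 S_conv S_xk S_p p_min.
set p := x k.+1; set xk := x k; set w := xk - p; set N := nrm2 (p - xk).
set G := Fbar A y gf alpha B x k; set c := (2 * alpha k)^-1.
have c_gt0 : 0 < c by rewrite invr_gt0 mulr_gt0.
set Q := 2^-1 * nrm2 (A *m w) + c * qform (B k) w.
set l := rdot (A *m p - y) (A *m w) + rdot (gf xk) w
          + c * (rdot (p - xk) (B k *m w) + rdot w (B k *m (p - xk))).
have G_line th : G (p + rscale th w) = G p + th * l + th ^+ 2 * Q := Fbar_line k p w th.
have Q_ge : c * (eta * N) <= Q.
  have [Bw _] := B_bnd w; have := nrm2_ge0 (A *m w).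
  have : c * (eta * nrm2 w) <= c * qform (B k) w by rewrite ler_pM2l.
  rewrite /N -opprB nrm2N -/w /Q; clear; lra.
have l_ge0 : 0 <= l.
  apply: (@slope_ge0_of_min _ l Q).
    by apply: le_trans _ Q_ge; rewrite mulr_ge0 ?(ltW c_gt0) // mulr_ge0 // nrm2_ge0.
  move=> th th_gt0 th_le1.
  have S_th : S (p + rscale th w).
    by rewrite rscale_segment; apply: S_conv; rewrite ?(ltW th_gt0).
  by have := p_min _ S_th; rewrite -/p -/G G_line -addrA lerDl.
have G_xk : G xk = G p + l + Q.
  have -> : xk = p + rscale 1 w by rewrite rscale1 /w addrC subrK.
  by rewrite G_line expr1n !mul1r.
have G_xkE : G xk = hfun A y xk + rdot (gf xk) xk.
  by rewrite /G /Fbar subrr qformE rdot0l mulr0 addr0.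
have G_pE : G p = hfun A y p + rdot (gf xk) p + c * qform (B k) (p - xk) by [].
have descent := descent_lemma f_grad gf_lip L_gt0 xk (p - xk).
rewrite [xk + _]addrC subrK rdotBr -/N in descent.
have [B_px _] := B_bnd (p - xk).
have cB : c * (eta * N) <= c * qform (B k) (p - xk) by rewrite ler_pM2l.
have -> : eta / alpha k = 2 * c * eta by rewrite /c; field; rewrite gt_eqF.
rewrite G_xkE G_pE in G_xk.
move: G_xk l_ge0 Q_ge cB descent.
move: (hfun A y p) (hfun A y xk) (f p) (f xk) (rdot _ p) (rdot _ xk) (c * qform _ _) => ? ? ? ? ? ? ?.
clear; lra.
Qed.

End GKSMStep.

Section GKSMRun.
Context {R : realType} {m n : nat}.
Context {A : 'M[R[i]]_(m, n)} {y : 'cV[R[i]]_m} {gf : 'cV[R[i]]_n -> 'cV[R[i]]_n}.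
Context {Cs : set 'cV[R[i]]_n} {K : option nat} {alpha : nat -> R}.
Context {B : nat -> 'M[R[i]]_n} {x : nat -> 'cV[R[i]]_n} {Vs : nat -> seq 'cV[R[i]]_n}.
Hypothesis run : GKSM_run A y gf Cs K alpha B x Vs.

Lemma GKSM_colspan_grow k z : (0 < k)%N -> in_colspan (Vs k) z -> in_colspan (Vs k.+1) z.
Proof.
move=> k_gt0 z_in; have [_ _ _ expand restart] := run.
have [kK | kK] := boolP (leK k K).
  by rewrite (expand k k_gt0 kK) /=; case: ifP => // _; exact: in_colspan_rcons.
by rewrite (restart k k_gt0 kK); exact: in_colspan_id.
Qed.

Lemma GKSM_feasible k : (0 < k)%N -> Cs (x k) /\ in_colspan (Vs k) (x k).
Proof.
have [_ [Cx1 [b1 x1E]] argmin _ _] := run.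
case: k => [//|[_|k _]]; first by split => //; exists b1.
have [b [-> Cb _]] := argmin k.+1 isT.
by split => //; apply: GKSM_colspan_grow => //; exists b.
Qed.

Lemma GKSM_decrease {f : 'cV[R[i]]_n -> R} {L eta eta_hi : R} {k} :
  is_gradient f gf -> lipschitz_with L gf -> 0 < L -> convex_subset Cs ->
  loewner_between eta eta_hi (B k) -> 0 <= eta -> 0 < alpha k -> (0 < k)%N ->
  hfun A y (x k.+1) + f (x k.+1)
    <= hfun A y (x k) + f (x k) - (eta / alpha k - L / 2) * nrm2 (x k.+1 - x k).
Proof.
move=> f_grad gf_lip L_gt0 C_conv B_bnd eta_ge0 alpha_gt0 k_gt0.
have [_ _ argmin _ _] := run; have [b [x_next Cb b_min]] := argmin k k_gt0.
apply: (@Fbar_argmin_decrease _ _ _ A y f gf L alpha B x k (Cs `&` in_colspan (Vs k)) eta eta_hi) => //.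
- exact: convex_subsetI C_conv (convex_colspan _).
- exact: GKSM_feasible.
- by rewrite x_next; split => //; exists b.
- by move=> z [Cz [b' zE]]; rewrite x_next; move: Cz; rewrite zE; exact: b_min.
Qed.

End GKSMRun.

Lemma telescope_decrease {R : realType} (a d : nat -> R) (c : R) :
  (forall j, a j.+1 <= a j - c * d j) -> forall M, a M + c * \sum_(0 <= j < M) d j <= a 0%N.
Proof.
move=> a_step; elim=> [|M IH]; first by rewrite big_geq // mulr0 addr0.
by rewrite big_nat_recr //= mulrDr; have := a_step M; lra.
Qed.

Lemma cvg0_bounded_series {R : realType} (u : R ^nat) (C : R) :
  (forall j, 0 <= u j) -> (forall M, \sum_(0 <= j < M) u j <= C) -> u n @[n --> \oo] --> 0.
Proof.
move=> u_ge0 u_bnd; apply: cvg_series_cvg_0; apply: nondecreasing_is_cvgn.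
  by apply: nondecreasing_series => j _ _; exact: u_ge0.
by exists C => _ [M _ <-]; exact: u_bnd.
Qed.

Lemma Delta_le_mean {R : realType} {n : nat} (x : nat -> 'cV[R[i]]_n) k :
  k%:R * Delta x k <= \sum_(0 <= j < k) nrm2 (x j.+2 - x j.+1).
Proof.
have : \sum_(1 <= j < k.+1) Delta x k <= \sum_(1 <= j < k.+1) nrm2 (x j.+1 - x j).
  apply: ler_sum_nat => j /andP[j_ge1 j_le]; rewrite /Delta.
  apply: le_trans (le_bigmin_nat _ _ j_ge1 j_le) _.
  by rewrite big_nat1_id ge_min lexx.
by rewrite sumr_const_nat subn1 /= mulr_natl big_add1.
Qed.
Lemma stepsize_gap_gt0 {R : realType} (eta L amax : R) : 0 < eta -> 0 < L -> 0 < amax ->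
  amax < 2 * eta / (eta + L) -> 0 < eta / amax - (eta + L) / 2.
Proof.
move=> eta_gt0 L_gt0 amax_gt0; have eL_gt0 : 0 < eta + L by rewrite addr_gt0.
rewrite ltr_pdivlMr // subr_gt0 ltr_pdivlMr //.
by move: (eta + L) => s; lra.
Qed.

Lemma stepsize_gap_le {R : realType} (eta L amax a : R) : 0 < eta -> 0 < a -> a <= amax ->
  eta / amax - (eta + L) / 2 <= eta / a - L / 2.
Proof.
move=> eta_gt0 a_gt0 a_le; have : eta / amax <= eta / a.
  by rewrite ler_pM2l // lef_pV2 ?posrE // (lt_le_trans a_gt0).
by move: (eta / amax) (eta / a) => ? ?; lra.
Qed.

Theorem theorem1 (R : realType) (m N : nat)
  (A : 'M[R[i]]_(m, N)) (y : 'cV[R[i]]_m)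
  (f : 'cV[R[i]]_N -> R) (gf : 'cV[R[i]]_N -> 'cV[R[i]]_N) (L : R)
  (Cs : set 'cV[R[i]]_N) (K : option nat)
  (alpha : nat -> R) (B : nat -> 'M[R[i]]_N)
  (eta_lo eta_hi amin amax : R)
  (x : nat -> 'cV[R[i]]_N) (Vs : nat -> seq 'cV[R[i]]_N) :
  adj A *m y != 0 ->
  is_gradient f gf ->
  (exists lb : R, forall z, lb <= f z) ->
  0 < L -> lipschitz_with L gf ->
  Cs !=set0 -> closed_subset Cs -> convex_subset Cs ->
  0 < eta_lo -> eta_lo <= eta_hi ->
  (forall k, (0 < k)%N -> is_hermitian (B k) /\ loewner_between eta_lo eta_hi (B k)) ->
  0 < amin -> amin <= amax -> amax < 2 * eta_lo / (eta_lo + L) ->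
  (forall k, (0 < k)%N -> amin <= alpha k <= amax) ->
  (forall K0 : nat, K = Some K0 -> (0 < K0)%N) ->
  GKSM_run A y gf Cs K alpha B x Vs ->
  let F := fun z => hfun A y z + f z in
  let ups := eta_lo / amax - (eta_lo + L) / 2 in
  let Fstar := inf [set F z | z in Cs] in
  (forall k, (0 < k)%N -> F (x k.+1) <= F (x k)) /\
  (forall k, (0 < k)%N -> Delta x k <= (F (x 1%N) - Fstar) / (ups * k%:R)) /\
  (nrm (x k.+1 - x k) @[k --> \oo] --> (0 : R)).
Proof.
move=> _ f_grad [lb f_lb] L_gt0 gf_lip _ _ C_conv eta_gt0 _ B_hyp amin_gt0 amin_le amax_lt
  alpha_bnd _ run F ups Fstar.
have amax_gt0 : 0 < amax := lt_le_trans amin_gt0 amin_le.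
have ups_gt0 : 0 < ups by exact: stepsize_gap_gt0.
have step k : (0 < k)%N -> F (x k.+1) <= F (x k) - ups * nrm2 (x k.+1 - x k).
  move=> k_gt0; have [_ B_bnd] := B_hyp k k_gt0.
  have /andP[amin_le_k k_le_amax] := alpha_bnd k k_gt0.
  have alpha_gt0 : 0 < alpha k := lt_le_trans amin_gt0 amin_le_k.
  apply: le_trans (GKSM_decrease run f_grad gf_lip L_gt0 C_conv B_bnd (ltW eta_gt0) alpha_gt0 k_gt0) _.
  by rewrite lerD2l lerN2 ler_wpM2r ?nrm2_ge0 ?stepsize_gap_le.
have Fstar_le z : Cs z -> Fstar <= F z.
  move=> Cz; apply: ge_inf; last by exists z.
  exists lb => _ [w _ <-]; rewrite /F -[lb]add0r lerD ?f_lb //.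
  by rewrite mulr_ge0 ?invr_ge0 ?nrm2_ge0.
have sum_le M : ups * \sum_(0 <= j < M) nrm2 (x j.+2 - x j.+1) <= F (x 1%N) - Fstar.
  have := telescope_decrease (fun j => F (x j.+1)) (fun j => nrm2 (x j.+2 - x j.+1)) ups
    (fun j => step j.+1 isT) M.
  have := Fstar_le _ (GKSM_feasible run M.+1 isT).1.
  by move: (ups * _) => S; lra.
split; [|split].
- by move=> k k_gt0; rewrite (le_trans (step k k_gt0)) // gerBl mulr_ge0 ?nrm2_ge0 ?ltW.
- move=> k k_gt0; rewrite ler_pdivlMr ?mulr_gt0 ?ltr0n // mulrC -mulrA.
  by apply: le_trans _ (sum_le k); rewrite ler_wpM2l ?(ltW ups_gt0) ?Delta_le_mean.
have nrm2_cvg : nrm2 (x k.+1 - x k) @[k --> \oo] --> 0.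
  rewrite -cvg_shiftS; apply: (@cvg0_bounded_series _ _ ((F (x 1%N) - Fstar) / ups)) => [j|M].
    exact: nrm2_ge0.
  by rewrite ler_pdivlMr // mulrC sum_le.
by rewrite -sqrtr0; apply: cvg_comp nrm2_cvg (@sqrt_continuous _ 0).
Qed.
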